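(* For every hypothesis class $\mathcal{H}$ and every integer $t\ge0$, $\mathcal{S}(\mathcal{H},t)\le\mathcal{N}(0,\mathcal{H},t)$.
   Context: Hypotheses are maps $\mathcal{X}\to\{-1,+1\}$. A depth-$t$ $Z$-valued tree $\mathbf{z}$ is a sequence of maps $\mathbf{z}_s:\{\pm1\}^{s-1}\to Z$, $s=1,\dots,t$; write $\mathbf{z}_s(\epsilon)=\mathbf{z}_s(\epsilon_1,\dots,\epsilon_{s-1})$ for $\epsilon\in\{\pm1\}^t$. For a depth-$t$ $\mathcal{X}$-valued tree $\mathbf{x}$, $S(\mathcal{H},\mathbf{x})=\{\epsilon\in\{\pm1\}^t:\exists h\in\mathcal{H},\ \epsilon_s=h(\mathbf{x}_s(\epsilon))\ \forall s\le t\}$; the tree shattering coefficient is $\mathcal{S}(\mathcal{H},t)=\max_{\mathbf{x}}|S(\mathcal{H},\mathbf{x})|$ for $t\ge1$, and $\mathcal{S}(\mathcal{H},0)=1$ if $\mathcal{H}\neq\emptyset$, $0$ otherwise. A set $V$ of depth-$t$ $\{\pm1\}$-valued trees is a sequential zero cover of $\mathcal{H}$ on $\mathbf{x}$ if for all $h\in\mathcal{H}$ and all $\epsilon\in\{\pm1\}^t$ there is $\mathbf{v}\in V$ with $\mathbf{v}_s(\epsilon)=h(\mathbf{x}_s(\epsilon))$ for $s=1,\dots,t$. $\mathcal{N}(0,\mathcal{H},\mathbf{x})$ is the minimum size of such a cover, and $\mathcal{N}(0,\mathcal{H},t)=\max_{\mathbf{x}}\mathcal{N}(0,\mathcal{H},\mathbf{x})$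 over depth-$t$ $\mathcal{X}$-valued trees. *)

From Stdlib Require Import ClassicalEpsilon.
From Stdlib Require List.
From mathcomp Require Import all_boot.
Set Implicit Arguments. Unset Strict Implicit. Unset Printing Implicit Defensive.

(* Signs {-1,+1} are encoded as bool (true = +1, false = -1). *)

Definition decP (P : Prop) : bool :=
  if excluded_middle_informative P then true else false.

(* Maximum of a set of naturals (0 if it has no maximum, e.g. if empty). *)
Definition natmax (P : nat -> Prop) : nat :=
  match excluded_middle_informative
          (exists m, P m /\ forall k, P k -> k <= m) with
  | left pf => proj1_sig (constructive_indefinite_description _ pf)
  | right _ => 0
  end.

(* Minimum of a set of naturals (0 if empty). *)
Definition natmin (P : nat -> Prop) : nat :=
  match excluded_middle_informative
          (exists m, P m /\ forall k, P k -> m <= k) with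
  | left pf => proj1_sig (constructive_indefinite_description _ pf)
  | right _ => 0
  end.

(* A depth-t Z-valued tree: z_s : {±1}^(s-1) -> Z for s = 1..t.
   Index s : 'I_t is 0-based (s stands for s+1 in the paper), and the map
   receives the prefix (eps_1,...,eps_s) as a sequence; only its values on
   sequences of length s matter. *)
Definition tree (Z : Type) (t : nat) := 'I_t -> seq bool -> Z.

Definition tapp (Z : Type) (t : nat) (z : tree Z t) (s : 'I_t)
  (e : t.-tuple bool) : Z := z s (take s e).

Definition in_S (X : Type) (H : (X -> bool) -> Prop) (t : nat)
  (x : tree X t) (e : t.-tuple bool) : Prop :=
  exists h, H h /\ forall s : 'I_t, tnth e s = h (tapp x s e).

Definition S_tree (X : Type) (H : (X -> bool) -> Prop) (t : nat)
  (x : tree X t) : nat :=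
  #|[set e : t.-tuple bool | decP (in_S H x e)]|.

Definition shatter_coeff (X : Type) (H : (X -> bool) -> Prop) (t : nat) : nat :=
  if t == 0 then (if decP (exists h, H h) then 1 else 0)
  else natmax (fun n => exists x : tree X t, n = S_tree H x).

Definition zero_cover (X : Type) (H : (X -> bool) -> Prop) (t : nat)
  (x : tree X t) (V : seq (tree bool t)) : Prop :=
  forall h, H h -> forall e : t.-tuple bool,
    exists v, List.In v V /\ forall s : 'I_t, tapp v s e = h (tapp x s e).

Definition N0_tree (X : Type) (H : (X -> bool) -> Prop) (t : nat)
  (x : tree X t) : nat :=
  natmin (fun n => exists V, zero_cover H x V /\ size V = n).

Definition N0 (X : Type) (H : (X -> bool) -> Prop) (t : nat) : nat :=
  natmax (fun n => exists x : tree X t, n = N0_tree H x).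

From Pilot Require Import Defs.
From mathcomp Require Import all_boot.
From Stdlib Require Import ClassicalEpsilon.
From Stdlib Require List.
Set Implicit Arguments. Unset Strict Implicit.

(* A sign tree v can follow at most one sign sequence e, i.e. satisfy
   v_s(e) = e_s for all s, since each e_s is then forced by the prefix
   e_1 .. e_{s-1}.  A zero cover of H on x contains such a tree for every e in
   S(H, x), so |S(H, x)| is at most the size of the cover.  Taking maxima over
   x gives S(H, t) <= N(0, H, t); for t = 0 a nonempty class simply needs a
   nonempty cover. *)

(* The qualification avoids ssrbool's unrelated [decP]. *)
Lemma decPP (P : Prop) : Defs.decP P <-> P.
Proof. by rewrite /Defs.decP; case: excluded_middle_informative. Qed.

Lemma natmax_le (P : nat -> Prop) B :
  (forall k, P k -> k <= B) -> natmax P <= B.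
Proof.
move=> bounded; rewrite /natmax; case: excluded_middle_informative => // pf.
by case: constructive_indefinite_description => m [Pm _] /=; apply: bounded.
Qed.

Lemma natmax_ge (P : nat -> Prop) B k :
  (forall j, P j -> j <= B) -> P k -> k <= natmax P.
Proof.
move=> bounded Pk; rewrite /natmax.
case: excluded_middle_informative => [pf|no_max].
  by case: constructive_indefinite_description => m [_ max_m] /=; apply: max_m.
have exP : exists j, Defs.decP (P j) by exists k; apply/decPP.
have boundedP j : Defs.decP (P j) -> j <= B by move/decPP; apply: bounded.
case: (ex_maxnP exP boundedP) => m /decPP Pm max_m; case: no_max.
by exists m; split=> // j /decPP; apply: max_m.
Qed.

Lemma natminP (P : nat -> Prop) :
  (exists k, P k) -> P (natmin P) /\ forall k, P k -> natmin P <= k.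
Proof.
move=> [k Pk]; rewrite /natmin.
case: excluded_middle_informative => [pf|no_min].
  by case: constructive_indefinite_description.
have exP : exists j, Defs.decP (P j) by exists k; apply/decPP.
case: (ex_minnP exP) => m /decPP Pm min_m; case: no_min.
by exists m; split=> // j /decPP; apply: min_m.
Qed.

Section TreePaths.
Variable t : nat.

Definition follows (v : tree bool t) (e : t.-tuple bool) : bool :=
  [forall s, tapp v s e == tnth e s].

Definition tree_paths (v : tree bool t) : {set t.-tuple bool} :=
  [set e | follows v e].

Lemma follows_take_eq (v : tree bool t) (e1 e2 : t.-tuple bool) k :
  follows v e1 -> follows v e2 -> k <= t -> take k e1 = take k e2.
Proof.
move=> /forallP f1 /forallP f2; elim: k => [|k IH] lt_kt; first by rewrite !take0.
have lt_k (e : t.-tuple bool) : k < size e by rewrite size_tuple.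
rewrite !(take_nth false (lt_k _)) IH ?(ltnW lt_kt) //; congr rcons.
have -> : nth false e1 k = tnth e1 (Ordinal lt_kt) by rewrite (tnth_nth false).
have -> : nth false e2 k = tnth e2 (Ordinal lt_kt) by rewrite (tnth_nth false).
by rewrite -(eqP (f1 _)) -(eqP (f2 _)) /tapp /= IH // ltnW.
Qed.

Lemma card_tree_paths (v : tree bool t) : #|tree_paths v| <= 1.
Proof.
apply/card_le1_eqP => e1 e2; rewrite !inE => f1 f2.
apply: val_inj; have := follows_take_eq f1 f2 (leqnn t).
by rewrite !take_oversize ?size_tuple.
Qed.

Lemma card_bigcup_tree_paths (V : seq (tree bool t)) :
  #|\bigcup_(v <- V) tree_paths v| <= size V.
Proof.
elim: V => [|v V IH]; first by rewrite big_nil cards0.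
rewrite big_cons /= (leq_trans (leq_card_setU _ _).1) //.
by rewrite -add1n leq_add // card_tree_paths.
Qed.

Lemma tree_paths_sub_bigcup (V : seq (tree bool t)) v :
  List.In v V -> tree_paths v \subset \bigcup_(w <- V) tree_paths w.
Proof.
elim: V => //= w V IH [<-|inV]; rewrite big_cons; first exact: subsetUl.
exact: subset_trans (IH inV) (subsetUr _ _).
Qed.

Definition constant_tree (e : t.-tuple bool) : tree bool t :=
  fun s _ => tnth e s.

Lemma In_constant_tree (e : t.-tuple bool) :
  List.In (constant_tree e) (map constant_tree (enum {: t.-tuple bool})).
Proof.
have : e \in enum {: t.-tuple bool} by rewrite mem_enum.
elim: (enum _) => //= e' s IH; rewrite in_cons => /orP[/eqP->|]; first by left.
by move/IH; right.
Qed.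

End TreePaths.

Section Covers.
Variables (X : Type) (H : (X -> bool) -> Prop) (t : nat).

Lemma constant_trees_zero_cover (x : tree X t) :
  zero_cover H x (map (@constant_tree t) (enum {: t.-tuple bool})).
Proof.
move=> h _ e; exists (constant_tree [tuple h (tapp x s e) | s < t]).
by split=> [|s]; [apply: In_constant_tree | rewrite /tapp /constant_tree tnth_mktuple].
Qed.

Lemma S_tree_le_cover (x : tree X t) V :
  zero_cover H x V -> S_tree H x <= size V.
Proof.
move=> cover; rewrite /S_tree (leq_trans _ (card_bigcup_tree_paths V)) //.
apply/subset_leq_card/subsetP => e; rewrite inE => /decPP[h [Hh he]].
have [v [inV vh]] := cover h Hh e.
apply: (subsetP (tree_paths_sub_bigcup inV)).
by rewrite inE; apply/forallP => s; rewrite vh he.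
Qed.

Lemma zero_cover_of_size_exp (x : tree X t) :
  exists2 V, zero_cover H x V & size V = 2 ^ t.
Proof.
exists (map (@constant_tree t) (enum {: t.-tuple bool})).
  exact: constant_trees_zero_cover.
by rewrite size_map -cardE card_tuple card_bool.
Qed.

Lemma N0_treeP (x : tree X t) :
  (exists2 V, zero_cover H x V & size V = N0_tree H x) /\ N0_tree H x <= 2 ^ t.
Proof.
have [V cover <-] := zero_cover_of_size_exp x.
have [[W [coverW sizeW]] min_N0] :=
  natminP (P := fun n => exists V, zero_cover H x V /\ size V = n)
    (ex_intro _ _ (ex_intro _ V (conj cover erefl))).
by split; [exists W | apply: (min_N0 (size V)); exists V].
Qed.

Lemma S_tree_le_N0_tree (x : tree X t) : S_tree H x <= N0_tree H x.
Proof. by have [[V cover <-] _] := N0_treeP x; apply: S_tree_le_cover. Qed.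

Lemma N0_tree_le_N0 (x : tree X t) : N0_tree H x <= N0 H t.
Proof.
apply: (@natmax_ge _ (2 ^ t)); last by exists x.
by move=> _ [x' ->]; have [] := N0_treeP x'.
Qed.

End Covers.

Theorem mainTheorem13 (X : Type) (H : (X -> bool) -> Prop) (t : nat) :
  shatter_coeff H t <= N0 H t.
Proof.
rewrite /shatter_coeff; case: eqP => [t0|_]; last first.
  apply: natmax_le => _ [x ->].
  exact: leq_trans (S_tree_le_N0_tree H x) (N0_tree_le_N0 H x).
subst t; case: ifP => // /decPP[h Hh].
have x : tree X 0 by case...
apply: leq_trans (N0_tree_le_N0 H x); have [[V cover <-] _] := N0_treeP H x.
by have [v [inV _]] := cover h Hh [tuple]; case: V inV {cover}.
Qed.
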